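(* Let $n\ge5$. On the $n$-gon graph over $\mathbb{F}_2$ with exterior algebra $\Omega_{min}=\Omega(\mathbb{Z}_n)$, the unique quantum metric $g=e^+\otimes e^-+e^-\otimes e^+$ has a unique QLC, namely $\nabla e^\pm=0$. It has $\sigma$ equal to the flip map $e^a\otimes e^b\mapsto e^b\otimes e^a$ ($a,b\in\{+,-\}$) and is flat.
   Context: $A=\mathbb{F}_2(\mathbb{Z}_n)$; $(R_\pm f)(i)=f(i\pm1)$ mod $n$. The $n$-gon graph has arrows $i\to i\pm1$ mod $n$; the calculus has basis over $A$ given by $e^+=\sum_i (i\to i+1)$, $e^-=\sum_i(i\to i-1)$, with $e^\pm f=(R_\pm f)e^\pm$ and ${\rm d} f=(R_+f+f)e^++(R_-f+f)e^-$; $\Omega^1\otimes_A\Omega^1$ is free with basis $e^a\otimes e^b$. $\Omega(\mathbb{Z}_n)$ is the exterior algebra generated by $A$ and $e^\pm$ with relations $(e^\pm)^2=0$, $e^+\wedge e^-+e^-\wedge e^+=0$, ${\rm d} e^\pm=0$. A bimodule connection is a linear $\nabla:\Omega^1\to\Omega^1\otimes_A\Omega^1$ with $\nabla(f\omega)={\rm d} f\otimes\omega+f\nabla\omega$ and $\nabla(\omega f)=(\nabla\omega)f+\sigma(\omega\otimes{\rm d} f)$ for a bimodule map $\sigma$; it is a QLC if $T_\nabla=\wedge\nabla-{\rm d}=0$ and $(\nabla\otimes\mathrm{id}+(\sigma\otimes\mathrm{id})(\mathrm{id}\otimes\nabla))g=0$. Flat means $R_\nabla=({\rm d}\otimes\mathrm{id}-(\wedge\otimes\mathrm{id})(\mathrm{id}\otimes\nabla))\nabla=0$.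 *)

(* The n-gon calculus over F_2, written in the left A-bases
   e^+, e^-  (Omega^1),  e^a (x) e^b  (Omega^1 (x)_A Omega^1),
   e^a (x) e^b (x) e^c  (triple tensor),  e^+ /\ e^-  (Omega^2 of Omega(Z_n)),
   (e^+ /\ e^-) (x) e^c  (Omega^2 (x)_A Omega^1).
   Index convention: [true] stands for "+", [false] for "-".
   An element is given by its (left) coefficient functions in A = F_2(Z_n). *)
From HB Require Import structures.
From mathcomp Require Import all_boot all_algebra.
Set Implicit Arguments. Unset Strict Implicit. Unset Printing Implicit Defensive.
Import GRing.Theory.
Local Open Scope ring_scope.

Section NGon.
Variable n : nat.

Definition A := 'I_n -> 'F_2.
(* w : Om1 represents  w true * e^+ + w false * e^- *)
Definition Om1 := bool -> A.
(* t : Om11 represents  sum_{a,b} t a b * e^a (x) e^b *)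
Definition Om11 := bool -> bool -> A.
(* u : Om111 represents  sum_{a,b,c} u a b c * e^a (x) e^b (x) e^c *)
Definition Om111 := bool -> bool -> bool -> A.
(* h : Om2 represents  h * e^+ /\ e^-   (Omega^2 is free of rank 1 on e^+/\e^-,
   since (e^a)^2 = 0 and e^- /\ e^+ = - e^+ /\ e^- = e^+ /\ e^- in char 2) *)
Definition Om2 := A.
(* r : Om21 represents  sum_c r c * (e^+ /\ e^-) (x) e^c *)
Definition Om21 := bool -> A.

(* (R_+ f)(i) = f(i+1), (R_- f)(i) = f(i-1) mod n *)
Definition shift (a : bool) (f : A) : A :=
  fun i => f (if a then ordS i else ord_pred i).

Definition zeroA : A := fun _ => 0.
Definition zero11 : Om11 := fun _ _ => zeroA.
Definition zero111 : Om111 := fun _ _ _ => zeroA.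
Definition zero21 : Om21 := fun _ => zeroA.

Definition add1 (w v : Om1) : Om1 := fun a i => w a i + v a i.
Definition add11 (t s : Om11) : Om11 := fun a b i => t a b i + s a b i.
Definition add111 (t s : Om111) : Om111 := fun a b c i => t a b c i + s a b c i.

Definition eb (a : bool) : Om1 := fun b _ => if b == a then 1 else 0.

(* bimodule structure: e^a f = (R_a f) e^a *)
Definition lmul1 (f : A) (w : Om1) : Om1 := fun a i => f i * w a i.
Definition rmul1 (w : Om1) (f : A) : Om1 := fun a i => w a i * shift a f i.
Definition lmul11 (f : A) (t : Om11) : Om11 := fun a b i => f i * t a b i.
Definition rmul11 (t : Om11) (f : A) : Om11 :=
  fun a b i => t a b i * shift a (shift b f) i.

Definition dA (f : A) : Om1 := fun a i => shift a f i + f i.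

Definition tens (w v : Om1) : Om11 := fun a b i => w a i * shift a (v b) i.
Definition tens21 (t : Om11) (v : Om1) : Om111 :=
  fun a b c i => t a b i * shift a (shift b (v c)) i.
Definition tens12 (w : Om1) (t : Om11) : Om111 :=
  fun a b c i => w a i * shift a (t b c) i.

Definition wedge (w v : Om1) : Om2 :=
  fun i => w true i * shift true (v false) i + w false i * shift false (v true) i.
Definition wedge11 (t : Om11) : Om2 := fun i => t true false i + t false true i.

(* exterior derivative on Omega^1:  d(w_a e^a) = d w_a /\ e^a  (d e^a = 0) *)
Definition d1 (w : Om1) : Om2 :=
  fun i => wedge (dA (w true)) (eb true) i + wedge (dA (w false)) (eb false) i.

Definition sigma_id (s : Om11 -> Om11) (u : Om111) : Om111 :=
  fun a b c => s (fun a' b' => u a' b' c) a b.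
Definition wedge_id (u : Om111) : Om21 := fun c => wedge11 (fun a b => u a b c).

Definition flip (t : Om11) : Om11 := fun a b => t b a.

Definition gmetric : Om11 := add11 (tens (eb true) (eb false)) (tens (eb false) (eb true)).

Definition left_connection (nabla : Om1 -> Om11) : Prop :=
  (forall w v, nabla (add1 w v) = add11 (nabla w) (nabla v)) /\
  (forall f w, nabla (lmul1 f w) = add11 (tens (dA f) w) (lmul11 f (nabla w))).

Definition bimodule_map (s : Om11 -> Om11) : Prop :=
  (forall t t', s (add11 t t') = add11 (s t) (s t')) /\
  (forall f t, s (lmul11 f t) = lmul11 f (s t)) /\
  (forall t f, s (rmul11 t f) = rmul11 (s t) f).

Definition bimodule_connection (nabla : Om1 -> Om11) (s : Om11 -> Om11) : Prop :=
  left_connection nabla /\ bimodule_map s /\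
  (forall w f, nabla (rmul1 w f) = add11 (rmul11 (nabla w) f) (s (tens w (dA f)))).

Definition torsion_free (nabla : Om1 -> Om11) : Prop :=
  forall w, wedge11 (nabla w) = d1 w.

(* (nabla (x) id + (sigma (x) id)(id (x) nabla)) g = 0, evaluated on
   g = e^+ (x) e^- + e^- (x) e^+  (char 2: signs irrelevant) *)
Definition metric_compatible (nabla : Om1 -> Om11) (s : Om11 -> Om11) : Prop :=
  add111
    (add111 (tens21 (nabla (eb true)) (eb false))
            (sigma_id s (tens12 (eb true) (nabla (eb false)))))
    (add111 (tens21 (nabla (eb false)) (eb true))
            (sigma_id s (tens12 (eb false) (nabla (eb true)))))
  = zero111.

Definition QLC (nabla : Om1 -> Om11) (s : Om11 -> Om11) : Prop :=
  bimodule_connection nabla s /\ torsion_free nabla /\ metric_compatible nabla s.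

(* R_nabla = (d (x) id - (/\ (x) id)(id (x) nabla)) nabla, computed by writing
   nabla w = sum_c (row c) (x) e^c  with (row c) a = (nabla w) a c;
   minus = plus in characteristic 2 *)
Definition curvature (nabla : Om1 -> Om11) (w : Om1) : Om21 :=
  let row := fun c : bool => (fun a : bool => nabla w a c) in
  fun c i =>
    d1 (row c) i
    + wedge_id (tens12 (row true) (nabla (eb true))) c i
    + wedge_id (tens12 (row false) (nabla (eb false))) c i.

Definition flat (nabla : Om1 -> Om11) : Prop :=
  forall w, curvature nabla w = zero21.

End NGon.

From mathcomp Require Import all_boot all_algebra.
From Stdlib Require Import FunctionalExtensionality.
Import GRing.Theory.
Set Implicit Arguments. Unset Strict Implicit. Unset Printing Implicit Defensive.

(* A left connection is determined by the values N a = ∇e^a, and a left-linear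
   σ by the values S c c' = σ(e^c ⊗ e^c').  Writing the right Leibniz rule
   ∇(e^a f) = ∇((R_a f) e^a) in components and testing it on the indicator
   functions of the five points i-2, ..., i+2 of Z_n (distinct because n ≥ 5)
   gives linear equations over F_2 between these values at i.  With one
   component of metric compatibility and torsion freeness they force
   ∇e^± = 0 and σ = flip.  Then ∇(w_b e^b) = dw_b ⊗ e^b, whose curvature is
   d²w_b = 0; conversely this connection with the flip is checked to be a QLC
   coefficientwise. *)

Section CycleNeighbourhood.
Variable n : nat.

Lemma iter_ordS_val (j : 'I_n) k : iter k (@ordS n) j = (j + k) %% n :> nat.
Proof.
elim: k => [|k IHk] /=; first by rewrite addn0 modn_small.
by rewrite IHk -addn1 modnDml addn1 addnS.
Qed.

Lemma iter_ordS_eq (j : 'I_n) k l : k < n -> l < n ->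
  (iter k (@ordS n) j == iter l (@ordS n) j) = (k == l).
Proof.
by move=> kn ln; rewrite -val_eqE /= !iter_ordS_val eqn_modDl !modn_small.
Qed.

Lemma nbhd_eqF (n_gt4 : 4 < n) (i : 'I_n) :
  let P2 := ord_pred (ord_pred i) in let P1 := ord_pred i in
  let S1 := ordS i in let S2 := ordS (ordS i) in
  ((P1 == P2) = false) * ((P2 == P1) = false) * ((i == P2) = false) * ((P2 == i) = false) *
  ((S1 == P2) = false) * ((P2 == S1) = false) * ((S2 == P2) = false) * ((P2 == S2) = false) *
  ((i == P1) = false) * ((P1 == i) = false) * ((S1 == P1) = false) * ((P1 == S1) = false) *
  ((S2 == P1) = false) * ((P1 == S2) = false) * ((S1 == i) = false) * ((i == S1) = false) *
  ((S2 == i) = false) * ((i == S2) = false) * ((S2 == S1) = false) * ((S1 == S2) = false).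
Proof.
pose j := ord_pred (ord_pred i).
have E k l : k < l <= 4 ->
    (iter l (@ordS n) j == iter k (@ordS n) j) = false /\
    (iter k (@ordS n) j == iter l (@ordS n) j) = false.
  move=> /andP[kl l4]; have ln := leq_ltn_trans l4 n_gt4; have kn := ltn_trans kl ln.
  by rewrite !iter_ordS_eq // [l == k]eq_sym (ltn_eqF kl).
move: (E 0 1 isT) (E 0 2 isT) (E 0 3 isT) (E 0 4 isT) (E 1 2 isT)
      (E 1 3 isT) (E 1 4 isT) (E 2 3 isT) (E 2 4 isT) (E 3 4 isT).
rewrite /j /= !ord_predK.
by do 10![case=> -> ->]; do !split.
Qed.
End CycleNeighbourhood.

Local Open Scope ring_scope.

Lemma F2_cases (x : 'F_2) : x = 0 \/ x = 1.
Proof. by case: x => [[|[|m]] // lt_m2]; [left | right]; apply: val_inj. Qed.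

Lemma F2_ind (P : 'F_2 -> Prop) : P 0 -> P 1 -> forall x, P x.
Proof. by move=> P0 P1 x; case: (F2_cases x) => ->. Qed.

Ltac F2_atom t :=
  lazymatch t with
  | GRing.add _ _ => fail | GRing.mul _ _ => fail
  | @GRing.zero _ => fail | @GRing.one _ => fail
  | _ => tryif is_var t then fail else (let T := type of t in unify T 'F_2)
  end.

(* Generalizes every non-ring subterm of type 'F_2 and enumerates its two values. *)
Ltac F2_decide :=
  repeat match goal with
  | |- context [?t] => F2_atom t; let x := fresh "x" in generalize t; intro x
  end;
  repeat match goal with x : 'F_2 |- _ => revert x end;
  repeat match goal with |- forall x : 'F_2, _ => apply: F2_ind end;
  repeat match goal with
  | |- (@eq ?T _ _) -> _ =>
      unify T 'F_2; let H := fresh in move=> /eqP H; vm_compute in H;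
      first [discriminate H | clear H]
  | |- _ /\ _ => split
  end;
  apply/eqP; vm_compute; reflexivity.

Ltac unfold_calculus :=
  cbv beta iota delta [add1 add11 add111 lmul1 lmul11 rmul1 rmul11 tens tens21 tens12
    dA eb shift wedge wedge11 d1 sigma_id flip zero11 zero111 zeroA
    metric_compatible]; simpl.

Ltac funext := repeat (apply: functional_extensionality_dep => ?).

Ltac bool_cases := repeat match goal with b : bool |- _ => case: b end.

Section TrivialConnection.
Variable n : nat.

(* ∇(w_b e^b) = d w_b ⊗ e^b, so that ∇e^± = 0. *)
Definition nabla0 : Om1 n -> Om11 n := fun w a b => dA (w b) a.

Ltac nabla0_solve :=
  funext; cbv beta delta [nabla0]; unfold_calculus; bool_cases; rewrite /= ?ordSK ?ord_predK;
  F2_decide.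

Lemma nabla0_eb a : nabla0 (eb a) = @zero11 n.
Proof. by nabla0_solve. Qed.

Lemma nabla0_QLC : QLC nabla0 (@flip n).
Proof. by do !split; move=> *; nabla0_solve. Qed.

Lemma d1_dA (f : A n) : d1 (dA f) = @zeroA n.
Proof. by nabla0_solve. Qed.

Lemma tens12_zero (w : Om1 n) : tens12 w (@zero11 n) = @zero111 n.
Proof. by funext; rewrite /tens12 /shift /= mulr0. Qed.

Lemma wedge_id_zero : wedge_id (@zero111 n) = @zero21 n.
Proof. by funext; rewrite /wedge_id /wedge11 /= addr0. Qed.

Lemma nabla0_flat : flat nabla0.
Proof.
move=> w; apply: functional_extensionality => c.
rewrite /curvature !nabla0_eb !tens12_zero wedge_id_zero.
rewrite -[(nabla0 w)^~ c]/(dA (w c)) d1_dA.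
by funext; rewrite /zeroA /zero21 !addr0.
Qed.
End TrivialConnection.

Section FreeBases.
Variable n : nat.

Lemma Om1_decomp (w : Om1 n) :
  w = add1 (lmul1 (w true) (eb true)) (lmul1 (w false) (eb false)).
Proof. by funext; unfold_calculus; bool_cases; rewrite ?mulr1 ?mulr0 ?addr0 ?add0r. Qed.

Lemma Om11_decomp (t : Om11 n) :
  t = add11
        (add11 (lmul11 (t true true) (tens (eb true) (eb true)))
               (lmul11 (t true false) (tens (eb true) (eb false))))
        (add11 (lmul11 (t false true) (tens (eb false) (eb true)))
               (lmul11 (t false false) (tens (eb false) (eb false)))).
Proof. by funext; unfold_calculus; bool_cases; rewrite ?mulr1 ?mulr0 ?addr0 ?add0r. Qed.

Lemma ebE a b (i : 'I_n) : eb a b i = if b == a then 1 else 0.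
Proof. by []. Qed.

Lemma sum_eb_mul a (i : 'I_n) (G F : bool -> bool -> 'F_2) :
  \sum_(c : bool) \sum_(c' : bool) eb a c i * G c c' * F c c' =
  \sum_(c' : bool) G a c' * F a c'.
Proof.
by rewrite !big_bool; case: a; rewrite /eb /= !mul1r !mul0r !add0r ?addr0.
Qed.

End FreeBases.

Section Uniqueness.
Variables (n : nat) (nabla : Om1 n -> Om11 n) (s : Om11 n -> Om11 n).
Hypothesis nablaD : forall w v, nabla (add1 w v) = add11 (nabla w) (nabla v).
Hypothesis nabla_lmul :
  forall f w, nabla (lmul1 f w) = add11 (tens (dA f) w) (lmul11 f (nabla w)).
Hypothesis nabla_rmul :
  forall w f, nabla (rmul1 w f) = add11 (rmul11 (nabla w) f) (s (tens w (dA f))).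
Hypothesis sD : forall t t', s (add11 t t') = add11 (s t) (s t').
Hypothesis s_lmul : forall f t, s (lmul11 f t) = lmul11 f (s t).
Hypothesis nabla_torsion : torsion_free nabla.
Hypothesis nabla_metric : metric_compatible nabla s.
Hypothesis n_gt4 : (4 < n)%N.

Local Notation N a := (nabla (eb a)).
Local Notation S c c' := (s (tens (eb c) (eb c'))).

Definition nbr (a : bool) (i : 'I_n) : 'I_n := if a then ordS i else ord_pred i.

Definition delta (p : 'I_n) : A n := fun j => if j == p then 1 else 0.

Lemma sigma_coef t d e i :
  s t d e i = \sum_(c : bool) \sum_(c' : bool) t c c' i * S c c' d e i.
Proof.
rewrite {1}(Om11_decomp t) !sD !s_lmul.
by rewrite /add11 /lmul11 !big_bool /= !addrA.
Qed.

Lemma nabla_coef w :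
  nabla w = add11 (add11 (tens (dA (w true)) (eb true)) (lmul11 (w true) (N true)))
                  (add11 (tens (dA (w false)) (eb false)) (lmul11 (w false) (N false))).
Proof. by rewrite {1}(Om1_decomp w) nablaD !nabla_lmul. Qed.

Lemma leibniz_coef a d e i (f : A n) :
  (f (nbr a (nbr d i)) + f (nbr a i)) * eb a e i + f (nbr a i) * N a d e i =
  N a d e i * f (nbr e (nbr d i)) +
  \sum_(b : bool) (f (nbr b (nbr a i)) + f (nbr a i)) * S a b d e i.
Proof.
have := congr1 (fun t => t d e i) (nabla_rmul (eb a) f).
have -> : rmul1 (eb a) f = lmul1 (shift a f) (eb a).
  by funext; unfold_calculus; bool_cases; rewrite ?mulr1 ?mulr0 ?mul1r ?mul0r.
rewrite nabla_lmul /add11 /lmul11 /rmul11 /= sigma_coef => ->; congr (_ + _).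
by rewrite sum_eb_mul.
Qed.

Ltac eval_at i :=
  rewrite big_bool /delta /nbr /= ?ebE /= ?ordSK ?ord_predK ?(nbhd_eqF n_gt4 i) ?eqxx /=;
  rewrite ?(mul0r, mulr0, mul1r, mulr1, add0r, addr0).

Lemma sigma_aa_offdiag a i :
  [/\ S a (~~ a) a a i = 0, S (~~ a) a a a i = 0 & S (~~ a) (~~ a) a a i = 0].
Proof.
split.
- have := leibniz_coef a a a i (delta i).
  by case: a; eval_at i; F2_decide.
- have := leibniz_coef (~~ a) a a i (delta i).
  by case: a; eval_at i; F2_decide.
- have := leibniz_coef (~~ a) a a i (delta (nbr (~~ a) (nbr (~~ a) i))).
  by case: a; eval_at i; F2_decide.
Qed.

Lemma nabla_eb_aaa a i : N a a a i = 1 + S a a a a i.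
Proof.
have [offdiag _ _] := sigma_aa_offdiag a i.
have := leibniz_coef a a a i (delta (nbr a i)).
by case: a offdiag; eval_at i; F2_decide.
Qed.

Lemma metric_coef a b c i :
  N true a b i * eb false c i + \sum_(c' : bool) N false c' c (nbr true i) * S true c' a b i +
  (N false a b i * eb true c i + \sum_(c' : bool) N true c' c (nbr false i) * S false c' a b i)
  = 0.
Proof.
have := congr1 (fun u => u a b c i) nabla_metric.
by rewrite /add111 /sigma_id /= !sigma_coef !sum_eb_mul.
Qed.

Lemma metric_coef_aab a i : S a a a a i = 1 /\ N (~~ a) a (~~ a) (nbr a i) = 0.
Proof.
have [offd1 offd2 offd3] := sigma_aa_offdiag a i.
have := metric_coef a a (~~ a) i.
rewrite !big_bool; case: a offd1 offd2 offd3 (nabla_eb_aaa a i) => /= -> -> -> ->;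
  by rewrite !ebE /= ?(mul0r, mulr0, mul1r, mulr1, add0r, addr0); F2_decide.
Qed.

Lemma nabla_eb_aaa_eq0 a i : N a a a i = 0.
Proof. by rewrite nabla_eb_aaa (metric_coef_aab a i).1; F2_decide. Qed.

Lemma nabla_eb_aba_eq0 a i : N a (~~ a) a i = 0.
Proof.
have := (metric_coef_aab (~~ a) (nbr a i)).2; rewrite negbK.
by case: a; rewrite /nbr /= ?ordSK ?ord_predK.
Qed.

Lemma torsion_coef a i : N a true false i = N a false true i.
Proof.
have := congr1 (fun h => h i) (nabla_torsion (eb a)).
by case: a; rewrite /wedge11 /d1 /wedge /dA /shift /eb /=; F2_decide.
Qed.

Lemma nabla_eb_aab_eq0 a i : N a a (~~ a) i = 0.
Proof. by case: a (torsion_coef a i) (nabla_eb_aba_eq0 a i) => /=; F2_decide. Qed.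

Lemma nabla_eb_abb_eq0 a i : N a (~~ a) (~~ a) i = 0.
Proof.
have := leibniz_coef a (~~ a) (~~ a) i (delta (nbr (~~ a) (nbr (~~ a) i))).
by case: a; eval_at i; F2_decide.
Qed.

Lemma nabla_eb_eq0 a : N a = @zero11 n.
Proof.
have bool_eq_or_neg b : b = a \/ b = ~~ a by case: a; case: b; auto.
apply: functional_extensionality_dep => d; apply: functional_extensionality_dep => e.
apply: functional_extensionality => i; rewrite /zero11 /zeroA.
case: (bool_eq_or_neg d) => ->; case: (bool_eq_or_neg e) => ->.
- exact: nabla_eb_aaa_eq0.
- exact: nabla_eb_aab_eq0.
- exact: nabla_eb_aba_eq0.
- exact: nabla_eb_abb_eq0.
Qed.

Lemma sigma_tens_eb c c' : S c c' = flip (tens (eb c) (eb c')).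
Proof.
apply: functional_extensionality_dep => d; apply: functional_extensionality_dep => e.
apply: functional_extensionality => i.
rewrite /flip [RHS]/tens /shift.
have := leibniz_coef c d e i (delta (nbr c' (nbr c i))).
rewrite nabla_eb_eq0 /zero11 /zeroA.
by case: c; case: c'; case: d; case: e; eval_at i; F2_decide.
Qed.

Lemma sigma_eq_flip : s = @flip n.
Proof.
apply: functional_extensionality => t; apply: functional_extensionality_dep => d.
apply: functional_extensionality_dep => e; apply: functional_extensionality => i.
rewrite sigma_coef !big_bool !sigma_tens_eb.
by case: d; case: e;
  rewrite /flip /tens ?ebE /= ?(mul0r, mulr0, mul1r, mulr1, add0r, addr0).
Qed.

Lemma nabla_eq_nabla0 : nabla = @nabla0 n.
Proof.
apply: functional_extensionality => w.
rewrite nabla_coef !nabla_eb_eq0.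
by funext; rewrite /nabla0; unfold_calculus; bool_cases;
  rewrite ?(mul0r, mulr0, mul1r, mulr1, add0r, addr0).
Qed.

End Uniqueness.

Theorem proposition4p8 (n : nat) (hn : (5 <= n)%N) :
  (exists (nabla : Om1 n -> Om11 n) (s : Om11 n -> Om11 n),
      QLC nabla s /\ nabla (@eb n true) = @zero11 n /\ nabla (@eb n false) = @zero11 n)
  /\
  (forall (nabla : Om1 n -> Om11 n) (s : Om11 n -> Om11 n),
      QLC nabla s ->
      nabla (@eb n true) = @zero11 n /\ nabla (@eb n false) = @zero11 n /\
      s = @flip n /\ flat nabla).
Proof.
split.
  by exists (@nabla0 n), (@flip n); split; [exact: nabla0_QLC | split; exact: nabla0_eb].
move=> nabla s [[[nablaD nabla_lmul] [[sD [s_lmul _]] nabla_rmul]] [torsion metric]].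
have nabla_eb := nabla_eb_eq0 nabla_lmul nabla_rmul sD s_lmul torsion metric hn.
split; [exact: nabla_eb | split; [exact: nabla_eb | split]].
- exact: sigma_eq_flip nabla_lmul nabla_rmul sD s_lmul torsion metric hn.
- rewrite (nabla_eq_nabla0 nablaD nabla_lmul nabla_rmul sD s_lmul torsion metric hn).
  exact: nabla0_flat.
Qed.
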